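(* Let $k$ and $k'$ be positive-definite kernels on $\Omega\subseteq\mathbb{R}^d$. The following are equivalent: (a) the nonparametric models with covariances $k$ and $k'$ are prediction-equivalent on $\Omega$, i.e. $(k;\emptyset)\sim(k';\emptyset)$; (b) for every finite $\mathcal{X}\subset\Omega$ and every $\sigma^2>0$, the smoother matrices $\mathbf{M}_{\mathcal{X}}=\mathbf{K}_{\mathcal{X}}(\mathbf{K}_{\mathcal{X}}+\sigma^2\mathbf{I})^{-1}$ and $\mathbf{M}'_{\mathcal{X}}=\mathbf{K}'_{\mathcal{X}}(\mathbf{K}'_{\mathcal{X}}+\sigma^2\mathbf{I})^{-1}$ are equal.
   Context: For $\mathcal{X}=\{x_1,\ldots,x_n\}$, $\mathbf{K}_{\mathcal{X}}=[k(x_i,x_j)]_{i,j}$ and $\mathbf{K}'_{\mathcal{X}}=[k'(x_i,x_j)]_{i,j}$. GP regression with prior covariance $k$ and observations $\mathbf{y}\in\mathbb{R}^n$ at $\mathcal{X}$ with noise variance $\sigma^2$ has predictive mean $\mathbb{E}_k(f(x)\mid\mathbf{y})=\mathbf{k}_{x,\mathcal{X}}(\mathbf{K}_{\mathcal{X}}+\sigma^2\mathbf{I})^{-1}\mathbf{y}$ and predictive variance $\mathrm{Var}_k(f(x)\mid\mathbf{y})=k(x,x)-\mathbf{k}_{x,\mathcal{X}}(\mathbf{K}_{\mathcal{X}}+\sigma^2\mathbf{I})^{-1}\mathbf{k}_{x,\mathcal{X}}^\top$, $\mathbf{k}_{x,\mathcal{X}}=[k(x,x_1),\ldots,k(x,x_n)]$.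 $(k;\emptyset)\sim(k';\emptyset)$ means: for every finite $\mathcal{X}\subset\Omega$, every $x\in\Omega$, $\mathbf{y}\in\mathbb{R}^{|\mathcal{X}|}$ and $\sigma^2>0$, the predictive means under $k$ and $k'$ are equal and the predictive variances are equal. *)

From HB Require Import structures.
From mathcomp Require Import all_boot all_order all_algebra.
From mathcomp Require Import reals.
Set Implicit Arguments. Unset Strict Implicit. Unset Printing Implicit Defensive.
Import Order.TTheory GRing.Theory Num.Theory.
Local Open Scope ring_scope.

Section GP.
Variables (R : realType) (d : nat).
Notation pt := 'rV[R]_d.

Definition gram (k : pt -> pt -> R) (n : nat) (X : 'I_n -> pt) : 'M[R]_n :=
  \matrix_(i, j) k (X i) (X j).

Definition kvec (k : pt -> pt -> R) (n : nat) (X : 'I_n -> pt) (x : pt) : 'rV[R]_n :=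
  \row_j k x (X j).

Definition pred_mean (k : pt -> pt -> R) (n : nat) (X : 'I_n -> pt)
    (s2 : R) (y : 'cV[R]_n) (x : pt) : R :=
  (kvec k X x *m invmx (gram k X + s2%:M) *m y) 0 0.

Definition pred_var (k : pt -> pt -> R) (n : nat) (X : 'I_n -> pt)
    (s2 : R) (x : pt) : R :=
  k x x - (kvec k X x *m invmx (gram k X + s2%:M) *m (kvec k X x)^T) 0 0.

Definition smoother (k : pt -> pt -> R) (n : nat) (X : 'I_n -> pt) (s2 : R)
    : 'M[R]_n :=
  gram k X *m invmx (gram k X + s2%:M).

(* positive-definite kernel on Omega (ML convention: symmetric and every
   Gram matrix of points of Omega is positive semidefinite) *)
Definition pd_kernel (Omega : pt -> Prop) (k : pt -> pt -> R) : Prop :=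
  (forall x y, Omega x -> Omega y -> k x y = k y x) /\
  (forall (n : nat) (X : 'I_n -> pt), (forall i, Omega (X i)) ->
     forall c : 'cV[R]_n, 0 <= (c^T *m gram k X *m c) 0 0).

(* (k; emptyset) ~ (k'; emptyset): prediction equivalence on Omega.
   A finite set X subset Omega is given by an injective enumeration 'I_n -> pt. *)
Definition pred_equiv (Omega : pt -> Prop) (k k' : pt -> pt -> R) : Prop :=
  forall (n : nat) (X : 'I_n -> pt), injective X -> (forall i, Omega (X i)) ->
  forall (x : pt), Omega x -> forall (y : 'cV[R]_n) (s2 : R), 0 < s2 ->
    pred_mean k X s2 y x = pred_mean k' X s2 y x /\
    pred_var k X s2 x = pred_var k' X s2 x.

End GP.

(* The smoother determines the Gram matrix: writing A = K_X + s I, one has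
   K_X A^-1 = 1 - s A^-1, and A is invertible because K_X is positive
   semidefinite. Gram matrices of one- and two-point subsets of Omega then
   recover k on Omega x Omega, and the predictive mean and variance only involve
   values of k on Omega. Conversely, the predictive mean at x_i for the data
   y = e_j is the entry (i, j) of the smoother matrix. *)

From HB Require Import structures.
From mathcomp Require Import all_boot all_order all_algebra.
From mathcomp Require Import reals.
Set Implicit Arguments. Unset Strict Implicit. Unset Printing Implicit Defensive.
Import Order.TTheory GRing.Theory Num.Theory.
Local Open Scope ring_scope.

Section PsdMatrix.
Variables (R : realFieldType) (n : nat).
Implicit Types (A B : 'M[R]_n) (s : R).

Definition psdmx A := forall c : 'cV[R]_n, 0 <= (c^T *m A *m c) 0 0.

Lemma psdmx_add_scalar_unitmx A s : psdmx A -> 0 < s -> A + s%:M \in unitmx.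
Proof.
move=> psdA s_gt0; rewrite unitmxE unitfE; apply/negP => /det0P [v v_neq0 vA0].
have vA : v *m A = - (s *: v).
  by apply/eqP; rewrite -subr_eq0 opprK -mul_mx_scalar -mulmxDr vA0.
have vvE : (v *m v^T) 0 0 = \sum_j v 0 j ^+ 2.
  by rewrite mxE; apply: eq_bigr => j _; rewrite mxE.
have vv_ge0 : 0 <= (v *m v^T) 0 0 by rewrite vvE sumr_ge0 // => j _; exact: sqr_ge0.
have vv_le0 : (v *m v^T) 0 0 <= 0.
  have := psdA v^T; rewrite trmxK vA mulNmx -scalemxAl !mxE oppr_ge0.
  by rewrite pmulr_rle0.
have /eqP : \sum_j v 0 j ^+ 2 = 0 by rewrite -vvE; apply/eqP; rewrite eq_le vv_le0.
rewrite psumr_eq0 => [/allP v0|j _]; last exact: sqr_ge0.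
apply: (negP v_neq0); apply/eqP/rowP => j; rewrite mxE.
by apply/eqP; rewrite -sqrf_eq0; apply: v0; rewrite mem_index_enum.
Qed.

Lemma smoother_mxE A s : A + s%:M \in unitmx ->
  A *m invmx (A + s%:M) = 1%:M - s *: invmx (A + s%:M).
Proof.
by move=> UA; rewrite -{1}(addrK s%:M A) mulmxBl mulmxV // mul_scalar_mx.
Qed.

Lemma smoother_mx_inj A B s : s != 0 ->
  A + s%:M \in unitmx -> B + s%:M \in unitmx ->
  A *m invmx (A + s%:M) = B *m invmx (B + s%:M) -> A = B.
Proof.
move=> s_neq0 UA UB; rewrite !smoother_mxE // => /addrI /oppr_inj /eqP.
rewrite (inj_eq (scalerI s_neq0)) => /eqP /(congr1 invmx).
by rewrite !invmxK => /addIr.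
Qed.

End PsdMatrix.

Lemma injective_two_points (T : eqType) (x y : T) :
  x != y -> injective (fun i : 'I_2 => if i == ord0 then x else y).
Proof.
move=> /negPf xy [[|[|a]] Ha] [[|[|b]] Hb] //= /eqP; rewrite ?xy ?(eq_sym y) ?xy //.
all: by move=> _; apply: val_inj.
Qed.

Section Kernels.
Variables (R : realType) (d : nat) (Omega : 'rV[R]_d -> Prop).
Implicit Types (k : 'rV[R]_d -> 'rV[R]_d -> R).

Lemma pred_mean_delta k n (X : 'I_n -> 'rV[R]_d) s2 i j :
  pred_mean k X s2 (delta_mx j 0) (X i) = smoother k X s2 i j.
Proof.
rewrite /pred_mean.
have -> : kvec k X (X i) = row i (gram k X) by apply/rowP => l; rewrite !mxE.
by rewrite -row_mul -colE !mxE.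
Qed.

Lemma eq_gram_of_eq_smoother k k' n (X : 'I_n -> 'rV[R]_d) s2 :
  pd_kernel Omega k -> pd_kernel Omega k' -> (forall i, Omega (X i)) -> 0 < s2 ->
  smoother k X s2 = smoother k' X s2 -> gram k X = gram k' X.
Proof.
move=> [_ psd_k] [_ psd_k'] OX s2_gt0.
apply: smoother_mx_inj; first by rewrite gt_eqF.
  exact: psdmx_add_scalar_unitmx (psd_k n X OX) s2_gt0.
exact: psdmx_add_scalar_unitmx (psd_k' n X OX) s2_gt0.
Qed.

Lemma eq_kernel_on_of_gram k k' :
  (forall n (X : 'I_n -> 'rV[R]_d), injective X -> (forall i, Omega (X i)) ->
     gram k X = gram k' X) ->
  forall x y, Omega x -> Omega y -> k x y = k' x y.
Proof.
move=> eq_gram x y Ox Oy; have [<-|xy] := eqVneq x y.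
  have X1inj : injective (fun _ : 'I_1 => x) by move=> a b _; rewrite !ord1.
  by have /matrixP/(_ ord0 ord0) := eq_gram 1%N _ X1inj (fun=> Ox); rewrite !mxE.
have O2 (i : 'I_2) : Omega (if i == ord0 then x else y) by case: ifP.
have /matrixP/(_ ord0 (lift ord0 ord0)) := eq_gram 2%N _ (injective_two_points xy) O2.
by rewrite !mxE.
Qed.

Lemma pred_equiv_of_eq_kernel_on k k' :
  (forall x y, Omega x -> Omega y -> k x y = k' x y) -> pred_equiv Omega k k'.
Proof.
move=> kk' n X _ OX x Ox y s2 _; rewrite /pred_mean /pred_var kk' //.
have -> : gram k X = gram k' X by apply/matrixP => i j; rewrite !mxE kk'.
have -> : kvec k X x = kvec k' X x by apply/rowP => j; rewrite !mxE kk'.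
by split.
Qed.

End Kernels.

Theorem mainTheorem4 (R : realType) (d : nat) (Omega : 'rV[R]_d -> Prop)
    (k k' : 'rV[R]_d -> 'rV[R]_d -> R) :
  pd_kernel Omega k -> pd_kernel Omega k' ->
  (pred_equiv Omega k k' <->
   (forall (n : nat) (X : 'I_n -> 'rV[R]_d), injective X ->
      (forall i, Omega (X i)) -> forall s2 : R, 0 < s2 ->
      smoother k X s2 = smoother k' X s2)).
Proof.
move=> pd_k pd_k'; split.
- move=> equiv n X Xinj OX s2 s2_gt0; apply/matrixP => i j.
  have [mean_eq _] := equiv n X Xinj OX (X i) (OX i) (delta_mx j 0) s2 s2_gt0.
  by rewrite -!pred_mean_delta.
- move=> eq_smoother; apply: pred_equiv_of_eq_kernel_on.
  apply: eq_kernel_on_of_gram => n X Xinj OX.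
  by apply: (eq_gram_of_eq_smoother pd_k pd_k' OX ltr01); exact: eq_smoother.
Qed.
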